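(* Let $H$ be a finitely realizable hypergroup and $N$ a normal sub-hypergroup of $H$. Then the quotient hypergroup $H/N$ is finitely realizable.
   Context: A hypergroup is a nonempty set $H$ with $*:H\times H\to P^*(H)$ (nonempty subsets), extended to subsets by $A*B=\bigcup_{a\in A,b\in B}a*b$, which is associative, has a unique identity $e$, unique inverses $h^{-1}$ with $e\in(h^{-1}*h)\cap(h*h^{-1})$, and is reversible ($c\in a*b\Rightarrow a\in c*b^{-1},\ b\in a^{-1}*c$). A sub-hypergroup $N$ is normal if $hN=Nh$ for all $h\in H$ (where $hN=\{h\}*N$). The quotient $H/N$ is the hypergroup on the set of cosets $\{hN:h\in H\}$ with $(aN)(bN)=\{cN: c\in aN*bN\}$. For a nonempty set $X$: $1_X$ is the diagonal, $p^*=\{(a,b):(b,a)\in p\}$, $xp=\{y:(x,y)\in p\}$. An association scheme on $X$ is a partition $S$ of $X\times X$ with $1_X\in S$, closed under $p\mapsto p^*$, such that for all $p,q,r\in S$ there is a cardinal $a_{pq}^r$ with $|yp\cap zq^*|=a_{pq}^r$ for all $y\in X$, $z\in yr$. $\mathbf{H}(S)$ is the hypergroup on $S$ with $p*q=\{r: a_{pq}^r\ge1\}$, identity $1_X$, inverse $p^*$. A hypergroup is finitely realizable if it is isomorphic to $\mathbf{H}(S)$ for some association scheme $S$ on a finite set $X$. *)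

From mathcomp Require Import all_boot.
Set Implicit Arguments.
Unset Strict Implicit.
Unset Printing Implicit Defensive.

(* A hyperoperation on T is encoded as a ternary relation:
   [mul a b c] means  c \in a * b. *)

Section Hypergroups.
Variable T : Type.
Variable mul : T -> T -> T -> Prop.

Definition is_identity (e : T) : Prop :=
  forall h x, (mul e h x <-> x = h) /\ (mul h e x <-> x = h).

Record is_hypergroup (e : T) (inv : T -> T) : Prop := {
  hg_nonempty : forall a b, exists c, mul a b c;
  hg_assoc : forall a b c x,
      (exists y, mul a b y /\ mul y c x) <-> (exists y, mul b c y /\ mul a y x);
  hg_id : is_identity e;
  hg_id_uniq : forall e', is_identity e' -> e' = e;
  hg_inv : forall h, mul (inv h) h e /\ mul h (inv h) e;
  hg_inv_uniq : forall h k, mul k h e -> mul h k e -> k = inv h;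
  hg_rev : forall a b c, mul a b c -> mul c (inv b) a /\ mul (inv a) c b
}.

Definition is_subhypergroup (inv : T -> T) (N : T -> Prop) : Prop :=
  (exists n, N n) /\
  (forall a b c, N a -> N b -> mul a b c -> N c) /\
  (forall a, N a -> N (inv a)).

Definition lcoset (N : T -> Prop) (h : T) : T -> Prop :=
  fun x => exists n, N n /\ mul h n x.
Definition rcoset (N : T -> Prop) (h : T) : T -> Prop :=
  fun x => exists n, N n /\ mul n h x.

Definition is_normal (inv : T -> T) (N : T -> Prop) : Prop :=
  is_subhypergroup inv N /\ forall h x, lcoset N h x <-> rcoset N h x.

Definition quot_carrier (N : T -> Prop) : Type :=
  {C : T -> Prop | exists h, C = lcoset N h}.

Definition quot_mul (N : T -> Prop) (A B C : quot_carrier N) : Prop :=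
  exists c, (exists a b, sval A a /\ sval B b /\ mul a b c) /\
            sval C = lcoset N c.

End Hypergroups.

Section Schemes.
Variable X : finType.

Definition rel_diag : {set X * X} := [set xy | xy.1 == xy.2].
Definition rel_tr (p : {set X * X}) : {set X * X} := [set xy | (xy.2, xy.1) \in p].
Definition nbr (p : {set X * X}) (x : X) : {set X} := [set y | (x, y) \in p].

Definition is_scheme (S : {set {set X * X}}) : Prop :=
  0 < #|X| /\
  partition S [set: X * X] /\
  rel_diag \in S /\
  (forall p, p \in S -> rel_tr p \in S) /\
  (forall p q r, p \in S -> q \in S -> r \in S ->
     exists a : nat, forall y z, (y, z) \in r ->
        #|nbr p y :&: nbr (rel_tr q) z| = a).

(* r \in p * q  in H(S)  iff  a_{pq}^r >= 1 *)
Definition scheme_mul (p q r : {set X * X}) : Prop :=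
  exists y z, (y, z) \in r /\ 0 < #|nbr p y :&: nbr (rel_tr q) z|.

End Schemes.

Definition finitely_realizable (T : Type) (mul : T -> T -> T -> Prop) : Prop :=
  exists (X : finType) (S : {set {set X * X}}),
    is_scheme S /\
    exists f : T -> {p : {set X * X} | p \in S},
      bijective f /\
      forall a b c, mul a b c <-> scheme_mul (sval (f a)) (sval (f b)) (sval (f c)).

(* Transport the hypergroup along its realization H = H(S). The relations of the
   elements of N form a closed subset of S, whose union is an equivalence on X;
   the images of the relations of S on the equivalence classes form an
   association scheme S//N, whose intersection numbers are path counts of S
   divided by the common class size. Two relations have the same image iff the
   corresponding elements lie in the same double coset N h N, which normality
   turns into the coset h N. Hence the relations of S//N are indexed by H/N, and
   the products of H(S//N) and of H/N agree. *)

From mathcomp Require Import all_boot.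
From mathcomp Require Import boolp.
From mathcomp Require functions.
Set Implicit Arguments.
Unset Strict Implicit.
Unset Printing Implicit Defensive.

Lemma card_preimset_const_fibers (A B : finType) (f : A -> B) (k : nat)
    (W : {set B}) :
  (forall b, #|[set a | f a == b]| = k) -> #|f @^-1: W| = #|W| * k.
Proof.
move=> fibers; rewrite -sum1_card (partition_big f (mem W)) => [|a]; last first.
  by rewrite inE.
rewrite -sum_nat_const; apply: eq_bigr => b bW.
rewrite -(fibers b) -sum1_card; apply: eq_bigl => a.
by rewrite !inE andb_idl // => /eqP ->.
Qed.

Section EquivClasses.
Variables (X : finType) (E : rel X).

Definition eclass x : {set X} := [set y | E x y].
Definition equot := {A : {set X} | A \in eclass @: [set: X]}.
Definition epi x : equot := exist _ (eclass x) (imset_f _ (in_setT x)).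

Lemma epi_surj (U : equot) : exists x, epi x = U.
Proof.
case: U => A AE; have /imsetP[x _ Ax] := AE.
by exists x; apply: val_inj; rewrite /= -Ax.
Qed.

Hypotheses (E_refl : reflexive E) (E_sym : symmetric E) (E_trans : transitive E).

Lemma epi_eq x y : (epi x == epi y) = E x y.
Proof.
apply/eqP/idP => [/(congr1 val)/setP/(_ y)|Exy]; first by rewrite !inE E_refl.
apply: val_inj; apply/setP => z; rewrite !inE.
by apply/idP/idP; apply: E_trans; rewrite // E_sym.
Qed.

Lemma card_epi_preimset (W : {set equot}) x :
  (forall y, #|eclass y| = #|eclass x|) -> #|epi @^-1: W| = #|W| * #|eclass x|.
Proof.
move=> eclass_const; apply: card_preimset_const_fibers => U.
have [y <-] := epi_surj U; rewrite -(eclass_const y); apply: eq_card => z.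
by rewrite !inE epi_eq E_sym.
Qed.

End EquivClasses.

Section Schemes.
Variables (X : finType) (S : {set {set X * X}}).

Lemma scheme_mulP (p q r : {set X * X}) :
  scheme_mul p q r <-> exists x w y, [/\ (x, w) \in p, (w, y) \in q & (x, y) \in r].
Proof.
split=> [[x [y [xy_r]]]|[x [w [y [xw yw xy]]]]].
  by rewrite card_gt0 => /set0Pn[w]; rewrite !inE => /andP[xw wy]; exists x, w, y.
by exists x, y; split=> //; rewrite card_gt0; apply/set0Pn; exists w; rewrite !inE xw yw.
Qed.

Hypothesis hS : is_scheme S.

Lemma scheme_partition : partition S [set: X * X].
Proof. by case: hS => _ []. Qed.

Lemma diag_scheme : rel_diag X \in S.
Proof. by case: hS => _ [_ []]. Qed.

Lemma tr_scheme (p : {set X * X}) : p \in S -> rel_tr p \in S.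
Proof. by case: hS => _ [_ [_ [trS _]]]; apply: trS. Qed.

Lemma scheme_rel_nonempty (p : {set X * X}) : p \in S -> exists xy, xy \in p.
Proof.
move=> pS; case/and3P: scheme_partition => _ _ S_neq0.
have /set0Pn[xy xy_p] : p != set0 by apply: contraNneq S_neq0 => <-.
by exists xy.
Qed.

Lemma pblock_scheme xy : pblock S xy \in S.
Proof. by apply: pblock_mem; case/and3P: scheme_partition => /eqP ->. Qed.

Lemma mem_pblock_scheme xy : xy \in pblock S xy.
Proof. by rewrite mem_pblock; case/and3P: scheme_partition => /eqP ->. Qed.

Lemma pblock_schemeE (p : {set X * X}) xy : p \in S -> xy \in p -> pblock S xy = p.
Proof. by case/and3P: scheme_partition => _ trivS _; apply: def_pblock. Qed.

Lemma pblock_schemeP (p : {set X * X}) xy : p \in S -> (pblock S xy == p) = (xy \in p).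
Proof.
by move=> pS; apply/eqP/idP => [<-|/(pblock_schemeE pS)]; rewrite ?mem_pblock_scheme.
Qed.

Lemma scheme_rel_eq (p q : {set X * X}) xy :
  p \in S -> q \in S -> xy \in p -> xy \in q -> p = q.
Proof.
by move=> pS qS xy_p xy_q; rewrite -(pblock_schemeE pS xy_p) (pblock_schemeE qS).
Qed.

Lemma scheme_intersection_const (p q r : {set X * X}) x y x' y' :
    p \in S -> q \in S -> r \in S -> (x, y) \in r -> (x', y') \in r ->
  #|nbr p x :&: nbr (rel_tr q) y| = #|nbr p x' :&: nbr (rel_tr q) y'|.
Proof.
move=> pS qS rS xy_r xy_r'; case: hS => _ [_ [_ [_ /(_ p q r pS qS rS)[a const]]]].
by rewrite !const.
Qed.

Lemma scheme_mul_path (p q r : {set X * X}) x y :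
    p \in S -> q \in S -> r \in S -> scheme_mul p q r -> (x, y) \in r ->
  exists2 w, (x, w) \in p & (w, y) \in q.
Proof.
move=> pS qS rS [x0 [y0 [xy0_r]]] + xy_r.
rewrite (scheme_intersection_const pS qS rS xy0_r xy_r) card_gt0 => /set0Pn[w].
by rewrite !inE => /andP[]; exists w.
Qed.

Lemma scheme_mul_diagl (p q : {set X * X}) : p \in S -> q \in S ->
  scheme_mul (rel_diag X) p q <-> q = p.
Proof.
move=> pS qS; split=> [/scheme_mulP[x [w [y []]]]|->].
  by rewrite inE => /eqP/= <- xy_p xy_q; apply: scheme_rel_eq xy_q xy_p.
have [[x y] xy_p] := scheme_rel_nonempty pS.
by apply/scheme_mulP; exists x, x, y; rewrite inE eqxx.
Qed.

Lemma scheme_mul_diagr (p q : {set X * X}) : p \in S -> q \in S ->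
  scheme_mul p (rel_diag X) q <-> q = p.
Proof.
move=> pS qS; split=> [/scheme_mulP[x [w [y []]]]|->].
  by move=> xw_p; rewrite inE => /eqP/= <- xw_q; apply: scheme_rel_eq xw_q xw_p.
have [[x y] xy_p] := scheme_rel_nonempty pS.
by apply/scheme_mulP; exists x, y, y; rewrite inE eqxx.
Qed.

Lemma scheme_mul_tr_diag (p : {set X * X}) : p \in S ->
  scheme_mul (rel_tr p) p (rel_diag X) /\ scheme_mul p (rel_tr p) (rel_diag X).
Proof.
case/scheme_rel_nonempty=> -[x y] xy_p.
by split; apply/scheme_mulP; [exists y, x, y | exists x, y, x]; rewrite !inE /= ?eqxx.
Qed.

Lemma card_paths_pblock (Phi : {set X * X} -> {set X * X} -> bool) x y :
  #|[set w | Phi (pblock S (x, w)) (pblock S (w, y))]| =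
  \sum_(st | [&& st.1 \in S, st.2 \in S & Phi st.1 st.2])
     #|nbr st.1 x :&: nbr (rel_tr st.2) y|.
Proof.
pose blocks w := (pblock S (x, w), pblock S (w, y)).
rewrite -sum1_card (partition_big blocks
  (fun st => [&& st.1 \in S, st.2 \in S & Phi st.1 st.2])) => [|w]; last first.
  by rewrite inE !pblock_scheme.
apply: eq_bigr => -[s t] /and3P[/= sS tS Phi_st]; rewrite sum1_card.
apply: eq_card => w; rewrite unfold_in !inE -pair_eqE /= andb_idl.
  by rewrite !pblock_schemeP.
by case/andP=> /eqP-> /eqP->.
Qed.

Lemma card_paths_pblock_const (Phi : {set X * X} -> {set X * X} -> bool) x y x' y' :
  pblock S (x, y) = pblock S (x', y') ->
  #|[set w | Phi (pblock S (x, w)) (pblock S (w, y))]| =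
  #|[set w | Phi (pblock S (x', w)) (pblock S (w, y'))]|.
Proof.
move=> same_block; rewrite !card_paths_pblock; apply: eq_bigr => -[s t] /and3P[sS tS _].
apply: (scheme_intersection_const sS tS (pblock_scheme (x, y))).
  exact: mem_pblock_scheme.
by rewrite same_block mem_pblock_scheme.
Qed.

End Schemes.

Record closed_subset (X : finType) (S NS : {set {set X * X}}) : Prop := ClosedSubset {
  closed_sub : {subset NS <= S};
  closed_diag : rel_diag X \in NS;
  closed_tr : forall p, p \in NS -> rel_tr p \in NS;
  closed_mul : forall p q r,
    p \in NS -> q \in NS -> r \in S -> scheme_mul p q r -> r \in NS
}.

Section QuotientScheme.
Variables (X : finType) (S NS : {set {set X * X}}).
Hypotheses (hS : is_scheme S) (hNS : closed_subset S NS).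

Definition nrel : rel X := fun x y => pblock S (x, y) \in NS.

Lemma nrelP (n : {set X * X}) x y : n \in NS -> (x, y) \in n -> nrel x y.
Proof. by move=> nN xy_n; rewrite /nrel (pblock_schemeE hS (closed_sub hNS nN) xy_n). Qed.

Lemma nrel_refl : reflexive nrel.
Proof. by move=> x; apply: (nrelP (closed_diag hNS)); rewrite inE. Qed.

Lemma nrel_sym : symmetric nrel.
Proof.
have sym x y : nrel x y -> nrel y x.
  by move=> Nxy; apply: (nrelP (closed_tr hNS Nxy)); rewrite inE mem_pblock_scheme.
by move=> x y; apply/idP/idP; apply: sym.
Qed.

Lemma nrel_trans : transitive nrel.
Proof.
move=> y x z Nxy Nyz; apply: (closed_mul hNS Nxy Nyz (pblock_scheme hS _)).
by apply/scheme_mulP; exists x, y, z; rewrite !mem_pblock_scheme.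
Qed.

Local Notation Q := (equot nrel).
Local Notation pi := (epi nrel).

Lemma epi_nrelP x y : reflect (pi x = pi y) (nrel x y).
Proof. by rewrite -(epi_eq nrel_refl nrel_sym nrel_trans); apply: eqP. Qed.

Definition qrel (p : {set X * X}) : {set Q * Q} := [set (pi xy.1, pi xy.2) | xy in p].

Definition quotient_scheme : {set {set Q * Q}} := qrel @: S.

Lemma mem_qrel (p : {set X * X}) x y : (x, y) \in p -> (pi x, pi y) \in qrel p.
Proof. by move=> xy_p; apply/imsetP; exists (x, y). Qed.

Lemma qrelP (p : {set X * X}) x y :
  (pi x, pi y) \in qrel p <-> exists x' y', [/\ nrel x x', nrel y y' & (x', y') \in p].
Proof.
split=> [/imsetP[[x' y'] xy_p' /pair_equal_spec[Ex Ey]] | [x' [y' []]]].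
  by exists x', y'; split=> //; apply/epi_nrelP.
by move=> /epi_nrelP-> /epi_nrelP->; apply: mem_qrel.
Qed.

Lemma qrel_lift (p q : {set X * X}) x y x' y' u v : p \in S -> q \in S ->
    (x, y) \in p -> (x', y') \in q -> nrel x x' -> nrel y y' -> (u, v) \in p ->
  exists u' v', [/\ nrel u u', nrel v v' & (u', v') \in q].
Proof.
move=> pS qS xy_p xy_q' Nxx' Nyy' uv_p; rewrite nrel_sym in Nyy'.
have bS := pblock_scheme hS.
have t_m_p : scheme_mul (pblock S (x, y')) (pblock S (y', y)) p.
  by apply/scheme_mulP; exists x, y', y; rewrite !mem_pblock_scheme.
have n_q_t : scheme_mul (pblock S (x, x')) q (pblock S (x, y')).
  by apply/scheme_mulP; exists x, x', y'; rewrite !mem_pblock_scheme.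
have [w uw wv] := scheme_mul_path hS (bS _) (bS _) pS t_m_p uv_p.
have [u' uu' u'w] := scheme_mul_path hS (bS _) qS (bS _) n_q_t uw.
by exists u', w; split=> //; [apply: nrelP uu' | rewrite nrel_sym; apply: nrelP wv].
Qed.

Lemma qrel_meet (p q : {set X * X}) U V : p \in S -> q \in S ->
  (U, V) \in qrel p -> (U, V) \in qrel q -> qrel p = qrel q.
Proof.
have sub p' q' : p' \in S -> q' \in S ->
    (U, V) \in qrel p' -> (U, V) \in qrel q' -> qrel p' \subset qrel q'.
  move=> pS qS /imsetP[[x y] xy_p [-> ->]] /imsetP[[x' y'] xy_q].
  case/pair_equal_spec=> /epi_nrelP Nxx' /epi_nrelP Nyy'.
  apply/subsetP => _ /imsetP[[u v] uv_p ->] /=; apply/qrelP.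
  exact: qrel_lift pS qS xy_p xy_q Nxx' Nyy' uv_p.
by move=> pS qS Up Uq; apply/eqP; rewrite eqEsubset !sub.
Qed.

Lemma qrel_pblock (p : {set X * X}) x y : p \in S ->
  ((pi x, pi y) \in qrel p) = (qrel (pblock S (x, y)) == qrel p).
Proof.
move=> pS; have xy_b := mem_qrel (mem_pblock_scheme hS (x, y)).
by apply/idP/eqP => [|<-] //; apply: qrel_meet (pblock_scheme hS _) pS xy_b.
Qed.

Lemma qrel_diag : qrel (rel_diag X) = rel_diag Q.
Proof.
apply/setP => -[U V]; rewrite [in RHS]inE /=.
have [x <-] := epi_surj U; have [y <-] := epi_surj V.
apply/idP/eqP => [/qrelP[x' [y' [Nxx' Nyy' /[!inE] /eqP /= Ex'y']]]|->].
  by apply/epi_nrelP; rewrite (nrel_trans Nxx') // nrel_sym Ex'y'.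
by apply: mem_qrel; rewrite inE.
Qed.

Lemma qrel_tr (p : {set X * X}) : qrel (rel_tr p) = rel_tr (qrel p).
Proof.
apply/setP => -[U V]; rewrite [in RHS]inE /=.
by apply/imsetP/imsetP => -[[x y] xy [-> ->]]; exists (y, x); rewrite // inE in xy *.
Qed.

Lemma qrel_scheme_mul (p q r : {set X * X}) :
  scheme_mul p q r -> scheme_mul (qrel p) (qrel q) (qrel r).
Proof.
case/scheme_mulP=> x [w [y [xw wy xy]]].
by apply/scheme_mulP; exists (pi x), (pi w), (pi y); split; apply: mem_qrel.
Qed.

Lemma card_eclass_const x y : #|eclass nrel x| = #|eclass nrel y|.
Proof.
(* [#|eclass x|] counts the closed paths x -> w -> x whose first step is in NS. *)
have diag z : pblock S (z, z) = rel_diag X.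
  by rewrite (pblock_schemeE hS (diag_scheme hS)) // inE /=.
exact: (card_paths_pblock_const hS (fun s _ => s \in NS) (etrans (diag x) (esym (diag y)))).
Qed.

Lemma card_qpaths (P P' : {set Q * Q}) x y :
  #|[set w | ((pi x, pi w) \in P) && ((pi w, pi y) \in P')]| =
  #|nbr P (pi x) :&: nbr (rel_tr P') (pi y)| * #|eclass nrel x|.
Proof.
rewrite -(card_epi_preimset nrel_refl nrel_sym nrel_trans _ (card_eclass_const^~ x)).
by apply: eq_card => w; rewrite !inE.
Qed.

Theorem quotient_scheme_is_scheme : is_scheme quotient_scheme.
Proof.
have [/card_gt0P[z _] _] := hS.
split; first by apply/card_gt0P; exists (pi z).
split.
  apply/and3P; split.
  - apply/eqP/setP => -[U V]; rewrite inE.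
    have [x <-] := epi_surj U; have [y <-] := epi_surj V.
    apply/bigcupP; exists (qrel (pblock S (x, y))).
      exact: imset_f (pblock_scheme hS _).
    exact: mem_qrel (mem_pblock_scheme hS _).
  - apply/trivIsetP => _ _ /imsetP[p pS ->] /imsetP[q qS ->] neq_pq.
    rewrite -setI_eq0; apply: contraNT neq_pq => /set0Pn[[U V] /setIP[Up Uq]].
    by rewrite (qrel_meet pS qS Up Uq).
  - apply/imsetP => -[p pS p0]; have [[x y] xy] := scheme_rel_nonempty hS pS.
    by have := mem_qrel xy; rewrite -p0 inE.
split; first by rewrite -qrel_diag; apply: imset_f (diag_scheme hS).
split.
  by move=> _ /imsetP[p pS ->]; rewrite -qrel_tr; apply: imset_f (tr_scheme hS pS).
move=> _ _ _ /imsetP[p pS ->] /imsetP[q qS ->] /imsetP[r rS ->].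
have [[x0 y0] xy0] := scheme_rel_nonempty hS rS.
exists #|nbr (qrel p) (pi x0) :&: nbr (rel_tr (qrel q)) (pi y0)|.
move=> _ _ /imsetP[[x y] xy [-> ->]] /=.
(* The paths x -> w -> y lying over paths of (qrel p, qrel q) are counted in S,
   where their number only depends on r, and in the quotient, where it is the
   intersection number times the class size. *)
pose Phi s t := (qrel s == qrel p) && (qrel t == qrel q).
have pathsE u v : [set w | ((pi u, pi w) \in qrel p) && ((pi w, pi v) \in qrel q)] =
                  [set w | Phi (pblock S (u, w)) (pblock S (w, v))].
  by apply/setP => w; rewrite !inE !qrel_pblock.
have same_block : pblock S (x, y) = pblock S (x0, y0).
  by rewrite !(pblock_schemeE hS rS).
have := card_paths_pblock_const hS Phi same_block.
rewrite -!pathsE !card_qpaths (card_eclass_const x x0) => /eqP.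
rewrite eqn_pmul2r ?card_gt0 => [/eqP //|].
by apply/set0Pn; exists x0; rewrite inE nrel_refl.
Qed.

End QuotientScheme.

Section RealizedHypergroup.
Variables (T : Type) (mul : T -> T -> T -> Prop) (e : T) (inv : T -> T) (N : T -> Prop).
Variables (X : finType) (S : {set {set X * X}}).
Variables (f : T -> {p | p \in S}) (g : {p | p \in S} -> T).
Hypotheses (hg : is_hypergroup mul e inv) (hN : is_normal mul inv N) (hS : is_scheme S).
Hypotheses (fK : cancel f g) (gK : cancel g f).
Hypothesis fmul :
  forall a b c, mul a b c <-> scheme_mul (val (f a)) (val (f b)) (val (f c)).

Local Notation R a := (val (f a)).

Lemma R_S a : R a \in S.
Proof. exact: valP. Qed.

Lemma R_inj a b : R a = R b -> a = b.
Proof. by move/val_inj/(can_inj fK). Qed.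

Lemma R_surj p : p \in S -> exists a, R a = p.
Proof. by move=> pS; exists (g (exist _ p pS)); rewrite gK. Qed.

Definition rel_elt xy : T := g (exist _ (pblock S xy) (pblock_scheme hS xy)).

Lemma R_rel_elt xy : R (rel_elt xy) = pblock S xy.
Proof. by rewrite gK. Qed.

Lemma mem_R_rel_elt xy : xy \in R (rel_elt xy).
Proof. by rewrite R_rel_elt mem_pblock_scheme. Qed.

Lemma mul_path a b c x y : mul a b c -> (x, y) \in R c ->
  exists2 w, (x, w) \in R a & (w, y) \in R b.
Proof. by move/fmul=> abc; apply: (scheme_mul_path hS (R_S a) (R_S b) (R_S c) abc). Qed.

Lemma mul_of_path a b c x w y :
  (x, w) \in R a -> (w, y) \in R b -> (x, y) \in R c -> mul a b c.
Proof. by move=> xw wy xy; apply/fmul/scheme_mulP; exists x, w, y. Qed.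

Lemma R_e : R e = rel_diag X.
Proof.
have [a0 Ra0] := R_surj (diag_scheme hS).
have R_eq x h : R x = R h <-> x = h by split=> [/R_inj|->].
suff <- : a0 = e by [].
apply: (hg_id_uniq hg) => h x; split; apply: iff_trans (fmul _ _ _) _; rewrite Ra0.
  exact: iff_trans (scheme_mul_diagl hS (R_S h) (R_S x)) (R_eq x h).
exact: iff_trans (scheme_mul_diagr hS (R_S h) (R_S x)) (R_eq x h).
Qed.

Lemma R_inv a : R (inv a) = rel_tr (R a).
Proof.
have [k Rk] := R_surj (tr_scheme hS (R_S a)).
have [tr_a a_tr] := scheme_mul_tr_diag hS (R_S a).
suff <- : k = inv a by [].
by apply: (hg_inv_uniq hg); apply/fmul; rewrite Rk R_e.
Qed.

Lemma N_mul a b c : N a -> N b -> mul a b c -> N c.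
Proof. by case: hN => -[_ [N_closed _]] _; apply: N_closed. Qed.

Lemma N_inv a : N a -> N (inv a).
Proof. by case: hN => -[_ [_ N_inv_closed]] _; apply: N_inv_closed. Qed.

Lemma N_e : N e.
Proof.
case: hN => -[[n Nn] _] _.
exact: N_mul (N_inv Nn) Nn (proj1 (hg_inv hg n)).
Qed.

Definition Nrels : {set {set X * X}} :=
  [set p in S | `[< exists2 n, N n & R n = p >]].

Lemma R_Nrels a : R a \in Nrels <-> N a.
Proof.
rewrite inE R_S; split=> [/asboolP[n Nn /R_inj <-] // | Na].
by apply/asboolP; exists a.
Qed.

Lemma Nrels_elt p : p \in Nrels -> exists2 n, N n & R n = p.
Proof. by rewrite inE => /andP[_ /asboolP]. Qed.

Lemma Nrels_closed : closed_subset S Nrels.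
Proof.
split.
- by move=> p; rewrite inE => /andP[].
- by rewrite -R_e; apply/R_Nrels/N_e.
- by move=> _ /Nrels_elt[n Nn <-]; rewrite -R_inv; apply/R_Nrels/N_inv.
move=> _ _ r /Nrels_elt[n Nn <-] /Nrels_elt[m Nm <-] /R_surj[c <-] /fmul nmc.
exact/R_Nrels/(N_mul Nn Nm nmc).
Qed.

Local Notation E := (nrel S Nrels).
Local Notation qrelN := (qrel S Nrels).
Let E_refl := nrel_refl hS Nrels_closed.
Let E_sym := nrel_sym hS Nrels_closed.
Let E_trans := nrel_trans hS Nrels_closed.
Let qrelNP := qrelP hS Nrels_closed.
Let qrelN_meet := qrel_meet hS Nrels_closed.

Lemma N_rel_elt x y : E x y -> N (rel_elt (x, y)).
Proof. by move=> Nxy; apply/R_Nrels; rewrite R_rel_elt. Qed.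

Lemma lcoset_refl h : lcoset mul N h h.
Proof. by exists e; split; [apply: N_e | apply/(proj2 (hg_id hg h h))]. Qed.

Lemma dcoset_lcoset n m h u c :
  N n -> N m -> mul n h u -> mul u m c -> lcoset mul N h c.
Proof.
(* N h N = h N N = h N, by normality and then associativity. *)
move=> Nn Nm nhu umc.
have [n' [Nn' hn'u]] : lcoset mul N h u by apply/(proj2 hN h u); exists n.
have [y [n'my hyc]] : exists y, mul n' m y /\ mul h y c by apply/(hg_assoc hg); exists u.
by exists y; split; first exact: N_mul Nn' Nm n'my.
Qed.

Lemma lcoset_qrel h c : lcoset mul N h c <-> qrelN (R c) = qrelN (R h).
Proof.
have [[x y] xy_c] := scheme_rel_nonempty hS (R_S c).
split=> [[n [Nn hnc]] | same].
  have [w xw wy] := mul_path hnc xy_c.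
  have Nwy : E w y by apply: nrelP hS Nrels_closed _ _ _ (proj2 (R_Nrels n) Nn) wy.
  have xy_h : (epi E x, epi E y) \in qrelN (R h).
    by apply/qrelNP; exists x, w; split; rewrite // ?E_refl // E_sym.
  exact: (qrelN_meet (R_S c) (R_S h) (mem_qrel S Nrels xy_c) xy_h).
have := mem_qrel S Nrels xy_c; rewrite same => /qrelNP[x' [y' [Nxx' Nyy' xy_h]]].
rewrite E_sym in Nyy'.
apply: (@dcoset_lcoset (rel_elt (x, x')) (rel_elt (y', y)) _ (rel_elt (x, y'))).
- exact: N_rel_elt.
- exact: N_rel_elt.
- exact: mul_of_path (mem_R_rel_elt _) xy_h (mem_R_rel_elt _).
- exact: mul_of_path (mem_R_rel_elt _) (mem_R_rel_elt _) xy_c.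
Qed.

Lemma lcoset_eq h h' :
  lcoset mul N h = lcoset mul N h' <-> qrelN (R h) = qrelN (R h').
Proof.
split=> [same | same]; first by apply/lcoset_qrel; rewrite -same; apply: lcoset_refl.
apply: funext => c; apply: propext.
by split=> /lcoset_qrel same_c; apply/lcoset_qrel; rewrite same_c same.
Qed.

Definition coset_rep (C : quot_carrier mul N) : T := sval (cid (svalP C)).

Lemma coset_repE C : sval C = lcoset mul N (coset_rep C).
Proof. exact: svalP (cid (svalP C)). Qed.

Definition quot_rel (C : quot_carrier mul N) : {P | P \in quotient_scheme S Nrels} :=
  exist _ (qrelN (R (coset_rep C))) (imset_f _ (R_S _)).

Lemma quot_rel_bij : bijective quot_rel.
Proof.
rewrite -functions.setTT_bijective; split=> [//|[A hA] [B hB] _ _ |[P PS] _].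
- move=> /(congr1 val) /= /lcoset_eq same; apply: eq_exist.
  apply: etrans (coset_repE (exist _ A hA)) _.
  exact: etrans same (esym (coset_repE (exist _ B hB))).
- have /imsetP[p pS Pp] := PS; have [a Ra] := R_surj pS.
  exists (exist _ (lcoset mul N a) (ex_intro _ a erefl)) => //; apply: val_inj => /=.
  by rewrite Pp -Ra; apply/lcoset_eq; rewrite -coset_repE.
Qed.

Lemma quot_rel_mul A B C :
  @quot_mul T mul N A B C <->
  scheme_mul (sval (quot_rel A)) (sval (quot_rel B)) (sval (quot_rel C)).
Proof.
split=> /= [[c [[a [b [Aa [Bb abc]]]] Cc]] | /scheme_mulP[U [W [V [UW WV UV]]]]].
  move: Aa Bb Cc; rewrite !coset_repE => /lcoset_qrel <- /lcoset_qrel <- /lcoset_eq ->.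
  exact/qrel_scheme_mul/fmul.
have [x Ux] := epi_surj U; have [w Ww] := epi_surj W; have [y Vy] := epi_surj V.
subst U V W; move: UW WV => /qrelNP[x1 [w1 [Nxx1 Nww1 xw1]]].
move=> /qrelNP[w2 [y2 [Nww2 Nyy2 wy2]]].
have Nw1w2 : E w1 w2 by rewrite E_sym in Nww1; apply: E_trans Nww1 Nww2.
have A_t : mul (coset_rep A) (rel_elt (w1, w2)) (rel_elt (x1, w2)).
  exact: mul_of_path xw1 (mem_R_rel_elt _) (mem_R_rel_elt _).
have t_B_c : mul (rel_elt (x1, w2)) (coset_rep B) (rel_elt (x1, y2)).
  exact: mul_of_path (mem_R_rel_elt _) wy2 (mem_R_rel_elt _).
exists (rel_elt (x1, y2)); split.
  exists (rel_elt (x1, w2)), (coset_rep B); rewrite !coset_repE; split.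
  - by exists (rel_elt (w1, w2)); split; first exact: N_rel_elt.
  - by split; first exact: lcoset_refl.
rewrite coset_repE; apply/lcoset_eq.
apply: (qrelN_meet (R_S _) (R_S _) UV).
by apply/qrelNP; exists x1, y2; split=> //; apply: mem_R_rel_elt.
Qed.

Lemma quotient_finitely_realizable : finitely_realizable (@quot_mul T mul N).
Proof.
exists (equot E), (quotient_scheme S Nrels).
split; first exact: quotient_scheme_is_scheme hS Nrels_closed.
by exists quot_rel; split; [apply: quot_rel_bij | apply: quot_rel_mul].
Qed.

End RealizedHypergroup.

Theorem proposition4p7 (T : Type) (mul : T -> T -> T -> Prop) (e : T)
    (inv : T -> T) (N : T -> Prop) :
  is_hypergroup mul e inv ->
  finitely_realizable mul ->
  is_normal mul inv N ->
  finitely_realizable (@quot_mul T mul N).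
Proof.
move=> hg [X [S [hS [f [[g fK gK] fmul]]]]] hN.
exact: quotient_finitely_realizable hg hN hS fK gK fmul.
Qed.
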